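(* Let $r=1$ with single input node $q$ (so $\Pi=\mathbf e_q$), $G\ge0$ entrywise, $\overline\lambda(G)<1$, $\sigma_v^2>0$, and let $(\mathcal S,\{j\},\mathcal P)$ be a node cutset partition with singleton cutset $\{j\}$. Let $\widetilde G=[G_{pp}\ G_{pc}]$. If every row sum of $\widetilde G$ is at most $1$, then for every $j_1\in\mathcal P$: $\mathbb P_{e_m}(j)\le\mathbb P_{e_m}(j_1)$ and $\mathbb P_{e_v}(j)\le\mathbb P_{e_v}(j_1)$. If every row sum of $\widetilde G$ is greater than $1$, then for every $j_1\in\mathcal P$: $\mathbb P_{e_m}(j)\ge\mathbb P_{e_m}(j_1)$ and $\mathbb P_{e_v}(j)\ge\mathbb P_{e_v}(j_1)$.
   Context: $G=[g_{ij}]\in\mathbb R^{n\times n}$. For a single sensor node $l$, $T_l(z)=\mathbf e_l^T(zI-G)^{-1}\mathbf e_q$ (scalar), $\|T_l\|_\infty=\sup_{|z|=1}|T_l(z)|$. The scalar input under $H_i$ has law $\mathcal N(\mu_i,\sigma_i^2)$; $N\in\mathbb N$. Mean shift ($\sigma_1^2=\sigma_2^2=\sigma_c^2>0$, $\mu_\Delta=\mu_2-\mu_1$): $\eta_s(l)^2=N\mu_\Delta^2|T_l(1)|^2/(\sigma_c^2|T_l(1)|^2+\sigma_v^2)$ and $\mathbb P_{e_m}(l)=Q_{\mathcal N}(\eta_s(l)/2)$. Covariance shift ($\mu_1=\mu_2$, $\sigma_1^2>\sigma_2^2\ge0$): $R_s(l)=(\sigma_1^2\|T_l\|_\infty^2+\sigma_v^2)/(\sigma_2^2\|T_l\|_\infty^2+\sigma_v^2)$,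 $\tau(R)=\ln R/(R-1)$ for $R>1$, $\tau(1)=1$, $\mathbb P_{e_v}(l)=\tfrac12[1-Q_{\chi^2}(1,\tau(R_s(l)))]+\tfrac12Q_{\chi^2}(1,\tau(R_s(l))R_s(l))$. $Q_{\mathcal N}(t)=\Pr[Z\ge t]$, $Z\sim\mathcal N(0,1)$; $Q_{\chi^2}(1,t)=\Pr[Y\ge t]$, $Y\sim\chi^2(1)$. Node cutset: a partition $\{1,\dots,n\}=\mathcal S\sqcup\mathcal C\sqcup\mathcal P$ into nonempty sets with the input node $q\in\mathcal S$, $\mathrm{dist}(\{q\},\mathcal C)\ge d$ for some $d\ge1$ (graph distance in the digraph with edges $\{(i,j):g_{ij}\ne0\}$), and $g_{ij}=g_{ji}=0$ for all $i\in\mathcal P$, $j\in\mathcal S$. $G_{pp}$, $G_{pc}$ are the submatrices of $G$ with rows in $\mathcal P$ and columns in $\mathcal P$, resp. $\mathcal C$. $\overline\lambda$ is spectral radius. *)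

From Stdlib Require Import Reals Lra Lia ClassicalEpsilon.
Open Scope R_scope.

Fixpoint rsum (n : nat) (f : nat -> R) : R :=
  match n with O => 0 | S m => rsum m f + f m end.

Definition Cx := (R * R)%type.
Definition Cre (z : Cx) : R := fst z.
Definition Cim (z : Cx) : R := snd z.
Definition RtoC (x : R) : Cx := (x, 0).
Definition Cadd (a b : Cx) : Cx := (fst a + fst b, snd a + snd b).
Definition Csub (a b : Cx) : Cx := (fst a - fst b, snd a - snd b).
Definition Cmul (a b : Cx) : Cx :=
  (fst a * fst b - snd a * snd b, fst a * snd b + snd a * fst b).
Definition Cmod (z : Cx) : R := sqrt (fst z ^ 2 + snd z ^ 2).
Fixpoint Csum (n : nat) (f : nat -> Cx) : Cx :=
  match n with O => RtoC 0 | S m => Cadd (Csum m f) (f m) end.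

(** * Real n x n matrices G : nat -> nat -> R (nodes 1..n are indices 0..n-1) *)
Definition nonneg_mx (n : nat) (G : nat -> nat -> R) : Prop :=
  forall i k, (i < n)%nat -> (k < n)%nat -> 0 <= G i k.

Definition Cmxv (n : nat) (G : nat -> nat -> R) (v : nat -> Cx) (i : nat) : Cx :=
  Csum n (fun k => Cmul (RtoC (G i k)) (v k)).

Definition is_eigenvalue (n : nat) (G : nat -> nat -> R) (lam : Cx) : Prop :=
  exists v : nat -> Cx,
    (exists i, (i < n)%nat /\ v i <> RtoC 0) /\
    (forall i, (i < n)%nat -> Cmxv n G v i = Cmul lam (v i)).

Definition spectral_radius_lt (n : nat) (G : nat -> nat -> R) (c : R) : Prop :=
  forall lam, is_eigenvalue n G lam -> Cmod lam < c.

(** * Transfer function T_l(z) = e_l^T (zI - G)^{-1} e_q.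
    (zI - G)^{-1} e_q is the solution x of (zI - G) x = e_q. *)
Definition solves_resolvent (n : nat) (G : nat -> nat -> R) (q : nat) (z : Cx)
  (x : nat -> Cx) : Prop :=
  forall i, (i < n)%nat ->
    Csub (Cmul z (x i)) (Cmxv n G x i) = RtoC (if Nat.eqb i q then 1 else 0).

Definition resolvent_eq (n : nat) (G : nat -> nat -> R) (q : nat) (z : Cx) : nat -> Cx :=
  epsilon (inhabits (fun _ => RtoC 0)) (solves_resolvent n G q z).

Definition Tf (n : nat) (G : nat -> nat -> R) (q l : nat) (z : Cx) : Cx :=
  resolvent_eq n G q z l.

Definition Hinf_norm (n : nat) (G : nat -> nat -> R) (q l : nat) : R :=
  epsilon (inhabits 0)
    (is_lub (fun y => exists z, Cmod z = 1 /\ y = Cmod (Tf n G q l z))).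

(** * Gaussian tail Q_N(t) = Pr[Z >= t], Z ~ N(0,1),
    written as 1/2 - (1/sqrt(2 pi)) * int_0^t exp(-x^2/2) dx. *)
Definition gauss_density_unnorm (x : R) : R := exp (- (x * x) / 2).

Lemma gauss_continuity : continuity gauss_density_unnorm.
Proof.
  unfold gauss_density_unnorm. intro x.
  apply continuity_pt_comp with (f1 := fun x => - (x * x) / 2) (f2 := exp).
  - unfold Rdiv. apply continuity_pt_mult.
    + apply continuity_pt_opp. apply continuity_pt_mult;
      apply derivable_continuous_pt; apply derivable_pt_id.
    + apply continuity_pt_const. intros a b; reflexivity.
  - apply derivable_continuous_pt. apply derivable_pt_exp.
Qed.

Definition gauss_integrable (a b : R) : Riemann_integrable gauss_density_unnorm a b.
Proof.
  destruct (Rle_dec a b) as [H|H].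
  - apply continuity_implies_RiemannInt; [exact H|].
    intros; apply gauss_continuity.
  - apply RiemannInt_P1. apply continuity_implies_RiemannInt; [lra|].
    intros; apply gauss_continuity.
Defined.

Definition QN (t : R) : R :=
  / 2 - / sqrt (2 * PI) * RiemannInt (gauss_integrable 0 t).

(** Chi-square(1) tail: Q_chi2(1,t) = Pr[Y >= t], Y = Z^2, Z ~ N(0,1):
    equals 1 for t <= 0 and Pr[|Z| >= sqrt t] = 2 Q_N(sqrt t) for t > 0. *)
Definition Qchi2_1 (t : R) : R :=
  if Rle_dec t 0 then 1 else 2 * QN (sqrt t).

Definition eta_s (n : nat) (G : nat -> nat -> R) (q : nat) (N : nat)
  (mu_D sc2 sv2 : R) (l : nat) : R :=
  let T1 := Cmod (Tf n G q l (RtoC 1)) in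
  sqrt (INR N * mu_D ^ 2 * T1 ^ 2 / (sc2 * T1 ^ 2 + sv2)).

Definition Pem (n : nat) (G : nat -> nat -> R) (q : nat) (N : nat)
  (mu_D sc2 sv2 : R) (l : nat) : R :=
  QN (eta_s n G q N mu_D sc2 sv2 l / 2).

Definition Rs (n : nat) (G : nat -> nat -> R) (q : nat) (s12 s22 sv2 : R) (l : nat) : R :=
  let h := Hinf_norm n G q l in
  (s12 * h ^ 2 + sv2) / (s22 * h ^ 2 + sv2).

Definition tau (r : R) : R := if Req_EM_T r 1 then 1 else ln r / (r - 1).

Definition Pev (n : nat) (G : nat -> nat -> R) (q : nat) (s12 s22 sv2 : R) (l : nat) : R :=
  let r := Rs n G q s12 s22 sv2 l in
  / 2 * (1 - Qchi2_1 (tau r)) + / 2 * Qchi2_1 (tau r * r).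

(** * Graph distance: walk of length k from a to b in the digraph with
    edges (i,k) such that g_ik <> 0 *)
Inductive walk (n : nat) (G : nat -> nat -> R) : nat -> nat -> nat -> Prop :=
| walk0 : forall a, (a < n)%nat -> walk n G 0 a a
| walkS : forall k a b c, (a < n)%nat -> (b < n)%nat -> G a b <> 0 ->
    walk n G k b c -> walk n G (S k) a c.

Definition dist_ge (n : nat) (G : nat -> nat -> R) (q : nat) (C : nat -> bool) (d : nat) : Prop :=
  forall k c, (k < d)%nat -> C c = true -> ~ walk n G k q c.

Definition node_cutset (n : nat) (G : nat -> nat -> R) (q : nat)
  (Sset Cset Pset : nat -> bool) : Prop :=
  (forall i, Sset i = true \/ Cset i = true \/ Pset i = true -> (i < n)%nat) /\
  (forall i, (i < n)%nat ->
     (Sset i = true /\ Cset i = false /\ Pset i = false) \/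
     (Sset i = false /\ Cset i = true /\ Pset i = false) \/
     (Sset i = false /\ Cset i = false /\ Pset i = true)) /\
  (exists i, Sset i = true) /\ (exists i, Cset i = true) /\ (exists i, Pset i = true) /\
  Sset q = true /\
  (exists d, (1 <= d)%nat /\ dist_ge n G q Cset d) /\
  (forall i k, Pset i = true -> Sset k = true -> G i k = 0 /\ G k i = 0).

Definition Gtilde_rowsum (n : nat) (G : nat -> nat -> R) (Cset Pset : nat -> bool) (i : nat) : R :=
  rsum n (fun k => if orb (Pset k) (Cset k) then G i k else 0).

(** Both error probabilities at a sensor [l] decrease with its gain: [Pem] through [|T_l(1)|],
    [Pev] through [||T_l||_inf].  For a nonnegative [G] of spectral radius [< 1] the matrix
    [I - G] is inverse positive (shown by continuation of [l I - G] from large [l]), so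
    [x = (I - G)^-1 e_q] is nonnegative and dominates [|(z I - G)^-1 e_q|] on the unit circle;
    hence both gains equal [x_l].  On [P] we have [x = G x] with only [P] and the cut node [j]
    feeding [P], and the row-sum condition makes the positive part of [x - x_j] (or of
    [x_j - x]) subinvariant under [G]; inverse positivity forces it to vanish, so [x] is
    extremal on [P] at [j]. *)

From Pilot Require Import Defs.
From Stdlib Require Import Reals Lra Lia ClassicalEpsilon Classical.
From Coquelicot Require Import Coquelicot.
Open Scope R_scope.

Lemma rsum_S n f : rsum (S n) f = rsum n f + f n.
Proof. reflexivity. Qed.

Lemma rsum_ext n f g : (forall k, (k < n)%nat -> f k = g k) -> rsum n f = rsum n g.
Proof.
  induction n as [|n IH]; intros Hfg; [reflexivity|].
  rewrite !rsum_S, IH by (intros; apply Hfg; lia). rewrite Hfg by lia. reflexivity.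
Qed.

Lemma rsum_plus n f g : rsum n (fun k => f k + g k) = rsum n f + rsum n g.
Proof. induction n as [|n IH]; simpl; [lra|]. rewrite IH; lra. Qed.

Lemma rsum_scal n c f : rsum n (fun k => c * f k) = c * rsum n f.
Proof. induction n as [|n IH]; simpl; [lra|]. rewrite IH; lra. Qed.

Lemma rsum_opp n f : rsum n (fun k => - f k) = - rsum n f.
Proof. induction n as [|n IH]; simpl; [lra|]. rewrite IH; lra. Qed.

Lemma rsum_zero n : rsum n (fun _ => 0) = 0.
Proof. induction n; simpl; lra. Qed.

Lemma rsum_le n f g : (forall k, (k < n)%nat -> f k <= g k) -> rsum n f <= rsum n g.
Proof.
  induction n as [|n IH]; intros Hfg; simpl; [lra|].
  pose proof (Hfg n ltac:(lia)). enough (rsum n f <= rsum n g) by lra.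
  apply IH; intros; apply Hfg; lia.
Qed.

Lemma rsum_nonneg n f : (forall k, (k < n)%nat -> 0 <= f k) -> 0 <= rsum n f.
Proof. intros Hf. rewrite <- (rsum_zero n). apply rsum_le, Hf. Qed.

Lemma rsum_abs n f : Rabs (rsum n f) <= rsum n (fun k => Rabs (f k)).
Proof.
  induction n as [|n IH]; simpl; [rewrite Rabs_R0; lra|].
  eapply Rle_trans; [apply Rabs_triang|]. lra.
Qed.

Lemma rsum_swap n m (F : nat -> nat -> R) :
  rsum n (fun i => rsum m (fun k => F i k)) = rsum m (fun k => rsum n (fun i => F i k)).
Proof.
  induction n as [|n IH]; simpl; [rewrite rsum_zero; lra|].
  rewrite IH, <- rsum_plus. reflexivity.
Qed.

Lemma term_le_rsum n f k :
  (k < n)%nat -> (forall i, (i < n)%nat -> 0 <= f i) -> f k <= rsum n f.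
Proof.
  induction n as [|n IH]; intros Hk Hf; [lia|]. simpl.
  destruct (Nat.eq_dec k n) as [->|Hkn].
  - enough (0 <= rsum n f) by lra. apply rsum_nonneg; intros; apply Hf; lia.
  - pose proof (Hf n ltac:(lia)).
    enough (f k <= rsum n f) by lra. apply IH; [lia|intros; apply Hf; lia].
Qed.

Lemma rsum_delta n f j :
  (j < n)%nat -> rsum n (fun k => if (k =? j)%nat then f k else 0) = f j.
Proof.
  induction n as [|n IH]; intros Hj; [lia|]. simpl. destruct (Nat.eqb_spec n j) as [->|Hnj].
  - rewrite (rsum_ext _ _ (fun _ => 0)), rsum_zero; [lra|].
    intros k Hk. destruct (Nat.eqb_spec k j); [lia|reflexivity].
  - rewrite IH by lia. lra.
Qed.

(** [Defs.Cx] and its operations are definitionally Coquelicot's [C]. *)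
Ltac cring := match goal with |- @eq _ ?a ?b => change (@eq C a b) end; ring.
Ltac cfield := match goal with |- @eq _ ?a ?b => change (@eq C a b) end; field.

Lemma Csum_S n f : Csum (S n) f = Cplus (Csum n f) (f n).
Proof. reflexivity. Qed.

Lemma Csum_ext n f g : (forall k, (k < n)%nat -> f k = g k) -> Csum n f = Csum n g.
Proof.
  induction n as [|n IH]; intros Hfg; [reflexivity|].
  rewrite !Csum_S, IH by (intros; apply Hfg; lia). rewrite Hfg by lia. reflexivity.
Qed.

Lemma Csum_minus n f g :
  Csum n (fun k => Cminus (f k) (g k)) = Cminus (Csum n f) (Csum n g).
Proof.
  induction n as [|n IH]; [apply injective_projections; cbn; lra|].
  rewrite !Csum_S, IH. cring.
Qed.

Lemma Csum_scal n c f : Csum n (fun k => Cmult c (f k)) = Cmult c (Csum n f).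
Proof.
  induction n as [|n IH]; [apply injective_projections; cbn; lra|].
  rewrite !Csum_S, IH. cring.
Qed.

Lemma Csum_zero n : Csum n (fun _ => RtoC 0) = RtoC 0.
Proof.
  induction n as [|n IH]; [reflexivity|].
  rewrite Csum_S, IH. cring.
Qed.

Lemma Csum_delta n (c x : nat -> C) i : (i < n)%nat ->
  Csum n (fun k => Cmult (if (i =? k)%nat then c k else RtoC 0) (x k)) = Cmult (c i) (x i).
Proof.
  induction n as [|n IH]; intros Hi; [lia|]. rewrite Csum_S. destruct (Nat.eqb_spec i n).
  - subst. rewrite (Csum_ext n _ (fun _ => RtoC 0)), Csum_zero; [cring|].
    intros k Hk. destruct (Nat.eqb_spec n k); [lia|cring].
  - rewrite IH by lia. cring.
Qed.

Lemma Csum_fst n f : fst (Csum n f) = rsum n (fun k => fst (f k)).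
Proof. induction n as [|n IH]; [reflexivity|]. simpl. rewrite IH. reflexivity. Qed.

Lemma Csum_snd n f : snd (Csum n f) = rsum n (fun k => snd (f k)).
Proof. induction n as [|n IH]; [reflexivity|]. simpl. rewrite IH. reflexivity. Qed.

Lemma Cmod_Csum n f : Cmod (Csum n f) <= rsum n (fun k => Cmod (f k)).
Proof.
  induction n as [|n IH]; [change (Csum 0 f) with (RtoC 0); rewrite Cmod_0; simpl; lra|].
  rewrite Csum_S. simpl. eapply Rle_trans; [apply Cmod_triangle|]. lra.
Qed.

Lemma Cmod_RtoC_nonneg l : 0 <= l -> Cmod (RtoC l) = l.
Proof. intros Hl. rewrite Cmod_R. apply Rabs_pos_eq, Hl. Qed.

(** * Injective square complex matrices are surjective *)

Definition cmx_apply n (A : nat -> nat -> C) (x : nat -> C) (i : nat) : C :=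
  Csum n (fun k => Cmult (A i k) (x k)).

Definition cmx_injective n A : Prop :=
  forall x, (forall i, (i < n)%nat -> cmx_apply n A x i = RtoC 0) ->
  forall i, (i < n)%nat -> x i = RtoC 0.

Definition cmx_surjective n A : Prop :=
  forall b, exists x, forall i, (i < n)%nat -> cmx_apply n A x i = b i.

Lemma cmx_apply_extend n A x xn i :
  cmx_apply (S n) A (fun k => if (k <? n)%nat then x k else xn) i =
  Cplus (cmx_apply n A x i) (Cmult (A i n) xn).
Proof.
  unfold cmx_apply. rewrite Csum_S, Nat.ltb_irrefl. f_equal.
  apply Csum_ext; intros k Hk. apply Nat.ltb_lt in Hk. rewrite Hk. reflexivity.
Qed.

(** One step of Gaussian elimination on the pivot [A n n]: the Schur complement [A'] is
    injective, so by induction surjective, and back-substitution solves the full system. *)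
Lemma cmx_surjective_pivot n A :
  (forall A', cmx_injective n A' -> cmx_surjective n A') ->
  A n n <> RtoC 0 -> cmx_injective (S n) A -> cmx_surjective (S n) A.
Proof.
  intros IH Hp Hinj.
  set (A' := fun i k => Cminus (A i k) (Cmult (Cdiv (A i n) (A n n)) (A n k))).
  assert (Hschur : forall x i, cmx_apply n A' x i =
    Cminus (cmx_apply n A x i) (Cmult (Cdiv (A i n) (A n n)) (cmx_apply n A x n))).
  { intros x i. unfold cmx_apply, A'. rewrite <- Csum_scal, <- Csum_minus.
    apply Csum_ext; intros; cring. }
  assert (Hinj' : cmx_injective n A').
  { intros x Hx.
    set (xn := Cdiv (Copp (cmx_apply n A x n)) (A n n)).
    assert (Hext : forall i, (i < S n)%nat ->
      cmx_apply (S n) A (fun k => if (k <? n)%nat then x k else xn) i = RtoC 0).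
    { intros i Hi. rewrite cmx_apply_extend. unfold xn.
      destruct (Nat.eq_dec i n) as [->|Hne]; [cfield; exact Hp|].
      specialize (Hx i ltac:(lia)). rewrite Hschur in Hx. rewrite <- Hx. cfield. exact Hp. }
    intros i Hi. specialize (Hinj _ Hext i ltac:(lia)). simpl in Hinj.
    apply Nat.ltb_lt in Hi. rewrite Hi in Hinj. exact Hinj. }
  intros b.
  destruct (IH A' Hinj' (fun i => Cminus (b i) (Cmult (Cdiv (A i n) (A n n)) (b n))))
    as [x Hx].
  set (xn := Cdiv (Cminus (b n) (cmx_apply n A x n)) (A n n)).
  exists (fun k => if (k <? n)%nat then x k else xn).
  intros i Hi. rewrite cmx_apply_extend. unfold xn.
  destruct (Nat.eq_dec i n) as [->|Hne]; [cfield; exact Hp|].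
  specialize (Hx i ltac:(lia)). rewrite Hschur in Hx.
  assert (Hxi : cmx_apply n A x i = Cplus (Cminus (b i) (Cmult (Cdiv (A i n) (A n n)) (b n)))
                  (Cmult (Cdiv (A i n) (A n n)) (cmx_apply n A x n))) by (rewrite <- Hx; cring).
  rewrite Hxi. cfield. exact Hp.
Qed.

Definition swap_index (r n i : nat) : nat :=
  if (i =? r)%nat then n else if (i =? n)%nat then r else i.

Lemma swap_index_le r n i : (r <= n)%nat -> (i <= n)%nat -> (swap_index r n i <= n)%nat.
Proof. unfold swap_index; intros; destruct (Nat.eqb_spec i r), (Nat.eqb_spec i n); lia. Qed.

Lemma swap_indexK r n i : swap_index r n (swap_index r n i) = i.
Proof.
  unfold swap_index; destruct (Nat.eqb_spec i r), (Nat.eqb_spec i n);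
  repeat match goal with |- context [Nat.eqb ?a ?b] => destruct (Nat.eqb_spec a b) end; lia.
Qed.

Lemma cmx_surjective_of_injective n A : cmx_injective n A -> cmx_surjective n A.
Proof.
  revert A. induction n as [|n IH]; intros A Hinj.
  { intros b. exists (fun _ => RtoC 0). intros; lia. }
  destruct (classic (exists r, (r <= n)%nat /\ A r n <> RtoC 0)) as [[r [Hr Hp]]|Hcol].
  - set (B := fun i k => A (swap_index r n i) k).
    assert (HB : forall x i, cmx_apply (S n) B x i = cmx_apply (S n) A x (swap_index r n i))
      by reflexivity.
    assert (HBinj : cmx_injective (S n) B).
    { intros x Hx. apply Hinj. intros i Hi.
      rewrite <- (swap_indexK r n i), <- HB. apply Hx.
      pose proof (swap_index_le r n i); lia. }
    assert (HBp : B n n <> RtoC 0).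
    { unfold B, swap_index. rewrite Nat.eqb_refl. destruct (Nat.eqb_spec n r); subst; auto. }
    intros b. destruct (cmx_surjective_pivot n B IH HBp HBinj (fun i => b (swap_index r n i)))
      as [x Hx].
    exists x. intros i Hi. rewrite <- (swap_indexK r n i), <- HB. apply Hx.
    pose proof (swap_index_le r n i); lia.
  - (* the last column vanishes, so the last basis vector is in the kernel *)
    exfalso.
    assert (Hker : forall i, (i < S n)%nat ->
      cmx_apply (S n) A (fun k => if (k =? n)%nat then RtoC 1 else RtoC 0) i = RtoC 0).
    { intros i Hi. unfold cmx_apply. rewrite Csum_S, Nat.eqb_refl.
      assert (Hin : A i n = RtoC 0) by (apply NNPP; intros Hne; apply Hcol; exists i; split; [lia|auto]).
      rewrite (Csum_ext n _ (fun _ => RtoC 0)), Csum_zero, Hin; [cring|].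
      intros k Hk. destruct (Nat.eqb_spec k n); [lia|cring]. }
    specialize (Hinj _ Hker n ltac:(lia)). simpl in Hinj. rewrite Nat.eqb_refl in Hinj.
    injection Hinj. lra.
Qed.

(** * Inverse positivity of [l I - G] for a nonnegative matrix [G] *)

Section InversePositive.

Variables (n : nat) (G : nat -> nat -> R).
Hypothesis HG : nonneg_mx n G.

Definition shifted_apply (l : R) (d : nat -> R) (i : nat) : R :=
  l * d i - rsum n (fun k => G i k * d k).

Definition l1norm (d : nat -> R) : R := rsum n (fun i => Rabs (d i)).

Definition inverse_positive (l : R) : Prop :=
  forall d, (forall i, (i < n)%nat -> 0 <= shifted_apply l d i) ->
  forall i, (i < n)%nat -> 0 <= d i.

Definition shifted_surjective (l : R) : Prop :=
  forall b, exists d, forall i, (i < n)%nat -> shifted_apply l d i = b i.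

Definition shifted_bounded (l K : R) : Prop :=
  forall d, l1norm d <= K * l1norm (shifted_apply l d).

Definition neg_part (d : nat -> R) (i : nat) : R := Rmax (- d i) 0.

Lemma l1norm_nonneg d : 0 <= l1norm d.
Proof. apply rsum_nonneg; intros; apply Rabs_pos. Qed.

Lemma neg_part_nonneg d i : 0 <= neg_part d i.
Proof. apply Rmax_r. Qed.

Lemma l1norm_neg_part d : l1norm (neg_part d) = rsum n (neg_part d).
Proof. apply rsum_ext; intros; apply Rabs_pos_eq, neg_part_nonneg. Qed.

Lemma nonneg_of_l1norm_neg_part d :
  l1norm (neg_part d) <= 0 -> forall i, (i < n)%nat -> 0 <= d i.
Proof.
  rewrite l1norm_neg_part. intros Hm i Hi.
  pose proof (term_le_rsum n (neg_part d) i Hi (fun k _ => neg_part_nonneg d k)).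
  pose proof (Rmax_l (- d i) 0). unfold neg_part in *. lra.
Qed.

Lemma shifted_apply_shift l m d i :
  shifted_apply l d i = shifted_apply m d i + (l - m) * d i.
Proof. unfold shifted_apply; ring. Qed.

Lemma shifted_apply_minus l d e i :
  shifted_apply l (fun k => d k - e k) i = shifted_apply l d i - shifted_apply l e i.
Proof.
  unfold shifted_apply, Rminus.
  rewrite (rsum_ext n _ (fun k => G i k * d k + - (G i k * e k))), rsum_plus, rsum_opp
    by (intros; ring).
  ring.
Qed.

Lemma neg_part_subinvariant l d :
  (forall i, (i < n)%nat -> 0 <= shifted_apply l d i) ->
  forall i, (i < n)%nat -> l * neg_part d i <= rsum n (fun k => G i k * neg_part d k).
Proof.
  intros Hd i Hi.
  assert (HGm : 0 <= rsum n (fun k => G i k * neg_part d k)).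
  { apply rsum_nonneg; intros k Hk. apply Rmult_le_pos; [apply HG|apply neg_part_nonneg]; auto. }
  unfold neg_part at 1. destruct (Rle_dec (- d i) 0) as [Hdi|Hdi].
  - rewrite Rmax_right by lra. lra.
  - rewrite Rmax_left by lra.
    assert (Hopp : rsum n (fun k => - (G i k * neg_part d k)) <= rsum n (fun k => G i k * d k)).
    { apply rsum_le; intros k Hk. pose proof (Rmax_l (- d k) 0). pose proof (HG i k Hi Hk).
      unfold neg_part. nra. }
    rewrite rsum_opp in Hopp. specialize (Hd i Hi). unfold shifted_apply in Hd. lra.
Qed.

Lemma inverse_positive_large l :
  rsum n (fun i => rsum n (fun k => G i k)) < l -> inverse_positive l.
Proof.
  intros Hl d Hd. apply nonneg_of_l1norm_neg_part.
  set (m := neg_part d). set (S := rsum n (fun i => rsum n (fun k => G i k))).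
  assert (HS : l * l1norm m <= S * l1norm m).
  { unfold l1norm. rewrite <- !rsum_scal.
    apply Rle_trans with (rsum n (fun i => rsum n (fun k => G i k * m k))).
    { apply rsum_le; intros i Hi. rewrite Rabs_pos_eq by apply neg_part_nonneg.
      apply neg_part_subinvariant; auto. }
    rewrite rsum_swap. apply rsum_le; intros k Hk.
    rewrite Rabs_pos_eq by apply neg_part_nonneg.
    rewrite (rsum_ext n _ (fun i => m k * G i k)), rsum_scal by (intros; ring).
    rewrite (Rmult_comm S). apply Rmult_le_compat_l; [apply neg_part_nonneg|].
    apply rsum_le; intros i Hi. apply (term_le_rsum n (fun k => G i k)); auto. }
  pose proof (l1norm_nonneg m). fold S in Hl. nra.
Qed.

(** Solving [(b I - G) e = (b - a) m] for the negative part [m] of [d] gives [e >= m], whence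
    [|m| <= K (b - a) |m| <= |m| / 2]. *)
Lemma inverse_positive_transfer a b K :
  a <= b -> inverse_positive b -> shifted_surjective b -> shifted_bounded b K ->
  (b - a) * K <= / 2 -> inverse_positive a.
Proof.
  intros Hab Pb Sb Kb Hs d Hd. apply nonneg_of_l1norm_neg_part.
  set (m := neg_part d).
  destruct (Sb (fun i => (b - a) * m i)) as [e He].
  assert (He0 : forall i, (i < n)%nat -> 0 <= e i).
  { apply Pb. intros i Hi. rewrite He by auto. pose proof (neg_part_nonneg d i). fold m in H. nra. }
  assert (Hde : forall i, (i < n)%nat -> 0 <= d i + e i).
  { apply Pb. intros i Hi. unfold shifted_apply.
    rewrite (rsum_ext n _ (fun k => G i k * d k + G i k * e k)), rsum_plus by (intros; ring).
    pose proof (He i Hi) as Hei. pose proof (Hd i Hi) as Hdi. unfold shifted_apply in Hei, Hdi.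
    pose proof (Rmax_l (- d i) 0). unfold m, neg_part in *. nra. }
  assert (Hme : l1norm m <= l1norm e).
  { apply rsum_le; intros i Hi. specialize (Hde i Hi). specialize (He0 i Hi).
    rewrite !Rabs_pos_eq by (auto; apply neg_part_nonneg). apply Rmax_lub; lra. }
  assert (Hbm : l1norm (shifted_apply b e) = (b - a) * l1norm m).
  { unfold l1norm. rewrite <- rsum_scal. apply rsum_ext; intros i Hi.
    rewrite He, Rabs_mult, !Rabs_pos_eq by (auto; try apply neg_part_nonneg; lra). reflexivity. }
  pose proof (Kb e) as Ke. rewrite Hbm in Ke. pose proof (l1norm_nonneg m). nra.
Qed.

Lemma shifted_bounded_perturb l m K :
  shifted_bounded l K -> 0 < K -> Rabs (m - l) * K <= / 2 -> shifted_bounded m (2 * K).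
Proof.
  intros Kb HK Hs d.
  assert (Hlm : l1norm (shifted_apply l d) <= l1norm (shifted_apply m d) + Rabs (m - l) * l1norm d).
  { unfold l1norm. rewrite <- rsum_scal, <- rsum_plus. apply rsum_le; intros i Hi.
    rewrite (shifted_apply_shift l m). eapply Rle_trans; [apply Rabs_triang|].
    rewrite Rabs_mult, (Rabs_minus_sym l m). lra. }
  pose proof (Kb d). pose proof (l1norm_nonneg d). pose proof (l1norm_nonneg (shifted_apply m d)).
  pose proof (Rabs_pos (m - l)). nra.
Qed.

Section Continuation.

Hypothesis Hsurj : forall l, 1 <= l -> shifted_surjective l.
Hypothesis Hbound : forall l, 1 <= l -> exists K, 0 < K /\ shifted_bounded l K.

Lemma inverse_positive_near l : 1 <= l -> exists delta, 0 < delta /\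
  forall a b, 1 <= a -> a <= b -> Rabs (b - l) <= delta -> inverse_positive b ->
  Rabs (a - l) <= delta -> inverse_positive a.
Proof.
  intros Hl. destruct (Hbound l Hl) as [K [HK Kl]].
  exists (/ (8 * K)). split; [apply Rinv_0_lt_compat; lra|].
  intros a b Ha Hab Hb Pb Hal.
  assert (HdK : / (8 * K) * K = / 8) by (field; lra).
  apply (inverse_positive_transfer a b (2 * K)); auto; [apply Hsurj; lra| |].
  - apply (shifted_bounded_perturb l); auto. pose proof (Rabs_pos (b - l)). nra.
  - assert (b - a <= 2 * / (8 * K)) by (apply Rabs_le_between in Hb, Hal; lra).
    pose proof (Rinv_0_lt_compat (8 * K) ltac:(lra)). nra.
Qed.

(** Let [ls] be the infimum of the [l >= 1] with [inverse_positive] on [[l, +oo)]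
    ([inverse_positive_large] makes this set nonempty).  Propagating backwards from [ls + delta]
    shows that [inverse_positive] holds on [[max 1 (ls - delta), +oo)], forcing [ls = 1]. *)
Lemma inverse_positive_one_of_bounds : inverse_positive 1.
Proof.
  set (S := rsum n (fun i => rsum n (fun k => G i k))).
  assert (HS : 0 <= S) by (apply rsum_nonneg; intros; apply rsum_nonneg; intros; apply HG; auto).
  set (E := fun t => exists l, t = - l /\ 1 <= l /\ forall mu, l <= mu -> inverse_positive mu).
  assert (HEb : bound E) by (exists (-1); intros t [l [-> [Hl _]]]; lra).
  assert (HEne : exists t, E t).
  { exists (- (S + 2)), (S + 2). repeat split; [lra|]. intros mu Hmu.
    apply inverse_positive_large. fold S; lra. }
  destruct (completeness E HEb HEne) as [m [Hub Hlub]].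
  set (ls := - m).
  assert (Hls : 1 <= ls).
  { enough (m <= -1) by (unfold ls; lra). apply Hlub. intros t [l [-> [Hl _]]]. lra. }
  assert (Habove : forall mu, ls < mu -> inverse_positive mu).
  { intros mu Hmu. apply NNPP. intros Hn.
    enough (m <= - mu) by (unfold ls in Hmu; lra).
    apply Hlub. intros t [l [-> [Hl Hp]]].
    destruct (Rle_dec l mu) as [Hle|Hgt]; [exfalso; apply Hn, Hp, Hle|lra]. }
  destruct (inverse_positive_near ls Hls) as [delta [Hdelta Hnear]].
  set (a := Rmax 1 (ls - delta)).
  assert (HEa : E (- a)).
  { exists a. repeat split; [apply Rmax_l|]. intros mu Hmu.
    destruct (Rlt_le_dec ls mu) as [Hgt|Hle]; [apply Habove, Hgt|].
    apply (Hnear mu (ls + delta)).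
    - pose proof (Rmax_l 1 (ls - delta)). fold a in H. lra.
    - lra.
    - rewrite Rabs_pos_eq; lra.
    - apply Habove. lra.
    - pose proof (Rmax_r 1 (ls - delta)). fold a in H. rewrite Rabs_left1; lra. }
  assert (Ha : a = 1).
  { pose proof (Hub _ HEa). unfold a, Rmax in *. destruct (Rle_dec 1 (ls - delta)); unfold ls in *; lra. }
  destruct HEa as [l [Hla [_ Hl]]]. apply Hl. lra.
Qed.

End Continuation.

End InversePositive.

Section SpectralRadius.

Variables (n : nat) (G : nat -> nat -> R).
Hypothesis HG : nonneg_mx n G.
Hypothesis Hsp : spectral_radius_lt n G 1.

Definition shifted_cmx (z : C) (i k : nat) : C :=
  Cminus (if (i =? k)%nat then z else RtoC 0) (RtoC (G i k)).

Lemma cmx_apply_shifted z x i : (i < n)%nat ->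
  cmx_apply n (shifted_cmx z) x i = Cminus (Cmult z (x i)) (Cmxv n G x i).
Proof.
  intros Hi. unfold cmx_apply, shifted_cmx, Cmxv.
  rewrite (Csum_ext n _ (fun k => Cminus
      (Cmult (if (i =? k)%nat then (fun _ => z) k else RtoC 0) (x k))
      (Cmult (RtoC (G i k)) (x k)))) by (intros; cring).
  rewrite Csum_minus, Csum_delta by auto. reflexivity.
Qed.

Lemma shifted_cmx_injective z : 1 <= Cmod z -> cmx_injective n (shifted_cmx z).
Proof.
  intros Hz x Hx i Hi. apply NNPP. intros Hxi.
  enough (Hev : is_eigenvalue n G z) by (specialize (Hsp z Hev); change (Cmod z < 1) in Hsp; lra).
  exists x. split; [exists i; auto|].
  intros k Hk. specialize (Hx k Hk). rewrite cmx_apply_shifted in Hx by auto.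
  change (Cmxv n G x k = Cmult z (x k)).
  replace (Cmxv n G x k) with (Cminus (Cmult z (x k)) (Cminus (Cmult z (x k)) (Cmxv n G x k)))
    by cring.
  rewrite Hx. cring.
Qed.

Lemma resolvent_spec q z : 1 <= Cmod z -> solves_resolvent n G q z (resolvent_eq n G q z).
Proof.
  intros Hz. unfold resolvent_eq. apply epsilon_spec.
  destruct (cmx_surjective_of_injective n _ (shifted_cmx_injective z Hz)
     (fun i => RtoC (if (i =? q)%nat then 1 else 0))) as [x Hx].
  exists x. intros i Hi. rewrite <- cmx_apply_shifted by auto. apply Hx, Hi.
Qed.

Lemma Cmxv_fst x i : fst (Cmxv n G x i) = rsum n (fun k => G i k * fst (x k)).
Proof. unfold Cmxv. rewrite Csum_fst. apply rsum_ext; intros; simpl; ring. Qed.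

Lemma Cmxv_snd x i : snd (Cmxv n G x i) = rsum n (fun k => G i k * snd (x k)).
Proof. unfold Cmxv. rewrite Csum_snd. apply rsum_ext; intros; simpl; ring. Qed.

Lemma shifted_surjective_ge1 l : 1 <= l -> shifted_surjective n G l.
Proof.
  intros Hl b.
  assert (Hz : 1 <= Cmod (RtoC l)) by (rewrite Cmod_RtoC_nonneg; lra).
  destruct (cmx_surjective_of_injective n _ (shifted_cmx_injective _ Hz) (fun i => RtoC (b i)))
    as [x Hx].
  exists (fun k => fst (x k)). intros i Hi. specialize (Hx i Hi).
  rewrite cmx_apply_shifted in Hx by auto. apply (f_equal fst) in Hx. simpl in Hx.
  rewrite Cmxv_fst in Hx. unfold shifted_apply. rewrite <- Hx. ring.
Qed.

Lemma shifted_injective_ge1 l d : 1 <= l ->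
  (forall i, (i < n)%nat -> shifted_apply n G l d i = 0) -> forall i, (i < n)%nat -> d i = 0.
Proof.
  intros Hl Hd i Hi.
  assert (Hz : 1 <= Cmod (RtoC l)) by (rewrite Cmod_RtoC_nonneg; lra).
  enough (Hdi : RtoC (d i) = RtoC 0) by (apply (f_equal fst) in Hdi; exact Hdi).
  apply (shifted_cmx_injective _ Hz (fun k => RtoC (d k))); auto.
  intros k Hk. rewrite cmx_apply_shifted by auto. specialize (Hd k Hk).
  unfold shifted_apply in Hd. apply injective_projections; simpl.
  - rewrite Cmxv_fst. simpl. lra.
  - rewrite Cmxv_snd. simpl. rewrite (rsum_ext n _ (fun _ => 0)), rsum_zero by (intros; ring). ring.
Qed.

Lemma shifted_apply_lin l (Y : nat -> nat -> R) (u : nat -> R) i :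
  shifted_apply n G l (fun k => rsum n (fun j => u j * Y j k)) i =
  rsum n (fun j => u j * shifted_apply n G l (Y j) i).
Proof.
  unfold shifted_apply, Rminus.
  rewrite (rsum_ext n (fun j => u j * (l * Y j i + - rsum n (fun k => G i k * Y j k)))
    (fun j => l * (u j * Y j i) + - rsum n (fun k => u j * G i k * Y j k))).
  2:{ intros j Hj. rewrite (rsum_ext n (fun k => u j * G i k * Y j k)
        (fun k => u j * (G i k * Y j k))), rsum_scal by (intros; ring). ring. }
  rewrite rsum_plus, rsum_opp, rsum_scal. f_equal.
  rewrite (rsum_swap n n (fun j k => u j * G i k * Y j k)). f_equal.
  apply rsum_ext; intros k Hk. rewrite <- rsum_scal. apply rsum_ext; intros; ring.
Qed.

(** An explicit inverse: [d] is the combination of the columns [Y j] of [(l I - G)^-1] with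
    coefficients [(l I - G) d], and [K] bounds the l1-norms of these columns. *)
Lemma shifted_bounded_ge1 l : 1 <= l -> exists K, 0 < K /\ shifted_bounded n G l K.
Proof.
  intros Hl.
  set (is_column := fun j (y : nat -> R) =>
    forall i, (i < n)%nat -> shifted_apply n G l y i = if (i =? j)%nat then 1 else 0).
  set (Y := fun j => epsilon (inhabits (fun _ : nat => 0)) (is_column j)).
  assert (HY : forall j, is_column j (Y j))
    by (intros j; apply epsilon_spec, shifted_surjective_ge1, Hl).
  exists (1 + rsum n (fun j => l1norm n (Y j))). split.
  { pose proof (rsum_nonneg n (fun j => l1norm n (Y j)) (fun j _ => l1norm_nonneg n (Y j))). lra. }
  intros d. set (u := shifted_apply n G l d).
  set (d' := fun k => rsum n (fun j => u j * Y j k)).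
  assert (Hd : forall k, (k < n)%nat -> d k = d' k).
  { intros k Hk. enough (d k - d' k = 0) by lra.
    revert k Hk. apply (shifted_injective_ge1 l); auto. intros i Hi.
    rewrite shifted_apply_minus. unfold d'.
    rewrite shifted_apply_lin, (rsum_ext n _ (fun j => if (j =? i)%nat then u j else 0)),
      rsum_delta by (auto; intros j Hj; rewrite (HY j i Hi);
                     destruct (Nat.eqb_spec i j), (Nat.eqb_spec j i); subst; try lia; ring).
    unfold u. ring. }
  apply Rle_trans with (rsum n (fun j => l1norm n u * l1norm n (Y j))).
  - unfold l1norm at 1. rewrite (rsum_ext n _ (fun k => Rabs (d' k))) by (intros; rewrite Hd; auto).
    apply Rle_trans with (rsum n (fun k => rsum n (fun j => Rabs (u j) * Rabs (Y j k)))).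
    { apply rsum_le; intros k Hk. eapply Rle_trans; [apply rsum_abs|].
      apply rsum_le; intros j Hj. rewrite Rabs_mult. lra. }
    rewrite rsum_swap. apply rsum_le; intros j Hj. rewrite rsum_scal.
    apply Rmult_le_compat_r; [apply l1norm_nonneg|].
    apply (term_le_rsum n (fun j => Rabs (u j))); auto. intros; apply Rabs_pos.
  - rewrite rsum_scal. pose proof (l1norm_nonneg n u). fold u. nra.
Qed.

Lemma inverse_positive_one : inverse_positive n G 1.
Proof.
  apply inverse_positive_one_of_bounds; auto.
  - apply shifted_surjective_ge1.
  - apply shifted_bounded_ge1.
Qed.

Lemma subinvariant_nonpos w :
  (forall i, (i < n)%nat -> w i <= rsum n (fun k => G i k * w k)) ->
  forall i, (i < n)%nat -> w i <= 0.
Proof.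
  intros Hw i Hi. enough (0 <= - w i) by lra.
  apply (inverse_positive_one (fun k => - w k)); auto. intros k Hk. unfold shifted_apply.
  rewrite (rsum_ext n _ (fun l => - (G k l * w l))), rsum_opp by (intros; ring).
  specialize (Hw k Hk). lra.
Qed.

End SpectralRadius.

(** * The Gaussian tail and the variance-test error *)

Definition gauss_mass (t : R) : R := RInt gauss_density_unnorm 0 t.

Lemma gauss_density_continuous x : continuous gauss_density_unnorm x.
Proof. apply continuity_pt_filterlim, gauss_continuity. Qed.

Lemma gauss_density_pos x : 0 < gauss_density_unnorm x.
Proof. apply exp_pos. Qed.

Lemma ex_RInt_gauss a b : ex_RInt gauss_density_unnorm a b.
Proof. apply (@ex_RInt_continuous R_CompleteNormedModule). intros; apply gauss_density_continuous. Qed.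

Lemma is_derive_gauss_mass x : is_derive gauss_mass x (gauss_density_unnorm x).
Proof.
  apply (is_derive_RInt _ gauss_mass 0 x); [|apply gauss_density_continuous].
  apply filter_forall. intros b. apply (@RInt_correct R_CompleteNormedModule), ex_RInt_gauss.
Qed.

Lemma gauss_mass_le t1 t2 : t1 <= t2 -> gauss_mass t1 <= gauss_mass t2.
Proof.
  intros Ht. unfold gauss_mass. rewrite <- (RInt_Chasles _ 0 t1 t2) by apply ex_RInt_gauss.
  enough (0 <= RInt gauss_density_unnorm t1 t2) by (simpl; unfold plus; simpl; lra).
  apply RInt_ge_0; [exact Ht|apply ex_RInt_gauss|intros; left; apply gauss_density_pos].
Qed.

Lemma inv_sqrt_2PI_pos : 0 < / sqrt (2 * PI).
Proof. apply Rinv_0_lt_compat, sqrt_lt_R0. pose proof PI_RGT_0. lra. Qed.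

Lemma QN_gauss_mass t : QN t = / 2 - / sqrt (2 * PI) * gauss_mass t.
Proof. unfold QN, gauss_mass. rewrite (RInt_Reals _ 0 t (gauss_integrable 0 t)). reflexivity. Qed.

Lemma QN_antitone t1 t2 : t1 <= t2 -> QN t2 <= QN t1.
Proof.
  intros Ht. rewrite !QN_gauss_mass.
  pose proof (gauss_mass_le _ _ Ht). pose proof inv_sqrt_2PI_pos. nra.
Qed.

Lemma tau_gt1 r : 1 < r -> tau r = ln r / (r - 1).
Proof. intros Hr. unfold tau. destruct (Req_EM_T r 1); [lra|reflexivity]. Qed.

Lemma tau_pos r : 1 <= r -> 0 < tau r.
Proof.
  intros Hr. destruct (Req_dec r 1) as [->|Hr1].
  - unfold tau. destruct (Req_EM_T 1 1); lra.
  - rewrite tau_gt1 by lra. apply Rdiv_lt_0_compat; [|lra].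
    rewrite <- ln_1. apply ln_increasing; lra.
Qed.

Lemma exp_le_compat x y : x <= y -> exp x <= exp y.
Proof. intros [Hxy|<-]; [left; apply exp_increasing, Hxy|lra]. Qed.

Lemma inv_sqrt_exp r : 0 < r -> / sqrt r = exp (- (ln r / 2)).
Proof.
  intros Hr. rewrite exp_Ropp. f_equal.
  rewrite <- (sqrt_square (exp (ln r / 2))) by (left; apply exp_pos).
  rewrite <- exp_plus. f_equal. rewrite <- (exp_ln r) at 1 by exact Hr. f_equal. field.
Qed.

(** With [a = / sqrt r] this compares the N(0, r) and N(0, 1) masses of [[0, s]]. *)
Definition scaled_gap (a s : R) : R := gauss_mass (a * s) - gauss_mass s.

Lemma is_derive_scaled_gap a s :
  is_derive (scaled_gap a) s (a * gauss_density_unnorm (a * s) - gauss_density_unnorm s).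
Proof.
  apply (is_derive_minus (fun s => gauss_mass (a * s)) gauss_mass); [|apply is_derive_gauss_mass].
  apply (is_derive_comp gauss_mass (fun s => a * s) s _ a); [apply is_derive_gauss_mass|].
  auto_derive; auto; ring.
Qed.

(** The two densities cross exactly at [s^2 = tau r * r = r ln r / (r - 1)]. *)
Lemma scaled_density_sign r s : 1 < r ->
  let D := / sqrt r * gauss_density_unnorm (/ sqrt r * s) - gauss_density_unnorm s in
  (tau r * r <= s * s -> 0 <= D) /\ (s * s <= tau r * r -> D <= 0).
Proof.
  intros Hr D.
  assert (Hsr : sqrt r * sqrt r = r) by (apply sqrt_sqrt; lra).
  assert (HD : D = exp (- (ln r / 2) - s * s / (2 * r)) - exp (- (s * s) / 2)).
  { unfold D, gauss_density_unnorm. rewrite (inv_sqrt_exp r) at 1 by lra.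
    rewrite <- exp_plus. f_equal. f_equal.
    replace (/ sqrt r * s * (/ sqrt r * s)) with (s * s / (sqrt r * sqrt r))
      by (field; apply Rgt_not_eq, sqrt_lt_R0; lra).
    rewrite Hsr. field. lra. }
  assert (Hexp : - (ln r / 2) - s * s / (2 * r) - - (s * s) / 2 =
                 (r - 1) * (s * s - tau r * r) / (2 * r)) by (rewrite tau_gt1 by lra; field; lra).
  rewrite HD. split; intros Hs.
  - enough (- (s * s) / 2 <= - (ln r / 2) - s * s / (2 * r)) by (pose proof (exp_le_compat _ _ H); lra).
    enough (0 <= (r - 1) * (s * s - tau r * r) / (2 * r)) by lra.
    apply Rmult_le_pos; [nra|left; apply Rinv_0_lt_compat; lra].
  - enough (- (ln r / 2) - s * s / (2 * r) <= - (s * s) / 2) by (pose proof (exp_le_compat _ _ H); lra).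
    enough ((r - 1) * (s * s - tau r * r) / (2 * r) <= 0) by lra.
    unfold Rdiv. apply Rmult_le_0_r; [nra|left; apply Rinv_0_lt_compat; lra].
Qed.

Lemma scaled_gap_continuous a x : continuity_pt (scaled_gap a) x.
Proof.
  apply continuity_pt_filterlim, (@ex_derive_continuous R_AbsRing R_NormedModule).
  eexists. apply is_derive_scaled_gap.
Qed.

Lemma scaled_gap_min r s : 1 <= r -> 0 <= s ->
  scaled_gap (/ sqrt r) (sqrt (tau r * r)) <= scaled_gap (/ sqrt r) s.
Proof.
  intros Hr Hs. destruct (Req_dec r 1) as [->|Hr1].
  { rewrite sqrt_1, Rinv_1. unfold scaled_gap. rewrite !Rmult_1_l. lra. }
  set (a := / sqrt r). set (s0 := sqrt (tau r * r)).
  assert (Hs0 : s0 * s0 = tau r * r)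
    by (apply sqrt_sqrt; pose proof (tau_pos r Hr); nra).
  pose proof (sqrt_pos (tau r * r)) as Hs00. fold s0 in Hs00.
  assert (Hderiv : forall x, is_derive (scaled_gap a) x
    (a * gauss_density_unnorm (a * x) - gauss_density_unnorm x)) by apply is_derive_scaled_gap.
  destruct (Rle_dec s0 s) as [Hle|Hgt].
  - destruct (MVT_gen (scaled_gap a) s0 s _ (fun x _ => Hderiv x)
      (fun x _ => scaled_gap_continuous a x)) as [c [Hc Hmvt]].
    rewrite Rmin_left, Rmax_right in Hc by auto.
    destruct (scaled_density_sign r c ltac:(lra)) as [Hsign _].
    specialize (Hsign ltac:(nra)). fold a in Hsign. nra.
  - destruct (MVT_gen (scaled_gap a) s s0 _ (fun x _ => Hderiv x)
      (fun x _ => scaled_gap_continuous a x)) as [c [Hc Hmvt]].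
    rewrite Rmin_left, Rmax_right in Hc by lra.
    destruct (scaled_density_sign r c ltac:(lra)) as [_ Hsign].
    specialize (Hsign ltac:(nra)). fold a in Hsign. nra.
Qed.

Definition Pev_ratio (r : R) : R :=
  / 2 * (1 - Qchi2_1 (tau r)) + / 2 * Qchi2_1 (tau r * r).

Lemma Qchi2_1_pos t : 0 < t -> Qchi2_1 t = 2 * QN (sqrt t).
Proof. intros Ht. unfold Qchi2_1. destruct (Rle_dec t 0); [lra|reflexivity]. Qed.

Lemma Pev_ratio_scaled_gap r : 1 <= r ->
  Pev_ratio r = / 2 + / sqrt (2 * PI) * scaled_gap (/ sqrt r) (sqrt (tau r * r)).
Proof.
  intros Hr. pose proof (tau_pos r Hr).
  assert (Hsr : 0 < sqrt r) by (apply sqrt_lt_R0; lra).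
  assert (Hs : / sqrt r * sqrt (tau r * r) = sqrt (tau r))
    by (rewrite sqrt_mult by lra; field; lra).
  unfold Pev_ratio, scaled_gap. rewrite Hs, !Qchi2_1_pos, !QN_gauss_mass by nra. field.
  apply Rgt_not_eq, sqrt_lt_R0. pose proof PI_RGT_0. lra.
Qed.

(** The threshold [sqrt (tau r * r)] minimises the gap, so raising [r] only lowers the error. *)
Lemma Pev_ratio_antitone r1 r2 : 1 <= r1 -> r1 <= r2 -> Pev_ratio r2 <= Pev_ratio r1.
Proof.
  intros Hr1 Hr12. rewrite !Pev_ratio_scaled_gap by lra.
  set (s1 := sqrt (tau r1 * r1)).
  pose proof (scaled_gap_min r2 s1 ltac:(lra) (sqrt_pos _)).
  assert (Ha : / sqrt r2 <= / sqrt r1)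
    by (apply Rinv_le_contravar; [apply sqrt_lt_R0; lra|apply sqrt_le_1; lra]).
  assert (gauss_mass (/ sqrt r2 * s1) <= gauss_mass (/ sqrt r1 * s1))
    by (apply gauss_mass_le; pose proof (sqrt_pos (tau r1 * r1)); fold s1 in H0; nra).
  pose proof inv_sqrt_2PI_pos. unfold scaled_gap in *. nra.
Qed.

(** * The transfer function of a nonnegative stable network *)

Section TransferFunction.

Variables (n : nat) (G : nat -> nat -> R) (q : nat).
Hypothesis HG : nonneg_mx n G.
Hypothesis Hsp : spectral_radius_lt n G 1.

Definition dc_gain (l : nat) : R := fst (Tf n G q l (Defs.RtoC 1)).

Lemma resolvent_one_spec : solves_resolvent n G q (Defs.RtoC 1) (resolvent_eq n G q (Defs.RtoC 1)).
Proof. apply resolvent_spec; auto. change (1 <= Cmod (RtoC 1)). rewrite Cmod_RtoC_nonneg; lra. Qed.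

Lemma shifted_apply_dc_gain i : (i < n)%nat ->
  shifted_apply n G 1 dc_gain i = if (i =? q)%nat then 1 else 0.
Proof.
  intros Hi. pose proof (f_equal fst (resolvent_one_spec i Hi)) as H. simpl in H.
  rewrite Cmxv_fst in H. unfold shifted_apply. rewrite <- H. unfold dc_gain, Tf. ring.
Qed.

Lemma dc_gain_nonneg i : (i < n)%nat -> 0 <= dc_gain i.
Proof.
  apply (inverse_positive_one n G HG Hsp). intros k Hk.
  rewrite shifted_apply_dc_gain by auto. destruct (k =? q)%nat; lra.
Qed.

Lemma Tf_one_real i : (i < n)%nat -> snd (Tf n G q i (Defs.RtoC 1)) = 0.
Proof.
  revert i. apply (shifted_injective_ge1 n G Hsp 1); [lra|]. intros i Hi.
  pose proof (f_equal snd (resolvent_one_spec i Hi)) as H. simpl in H.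
  rewrite Cmxv_snd in H. unfold shifted_apply, Tf. lra.
Qed.

Lemma Cmod_Tf_one i : (i < n)%nat -> Defs.Cmod (Tf n G q i (Defs.RtoC 1)) = dc_gain i.
Proof.
  intros Hi. unfold Defs.Cmod. rewrite Tf_one_real by auto. fold (dc_gain i).
  replace (dc_gain i ^ 2 + 0 ^ 2) with (dc_gain i * dc_gain i) by ring.
  apply sqrt_square, dc_gain_nonneg, Hi.
Qed.

(** On the unit circle [|x| <= G |x| + e_q] componentwise, so inverse positivity of [I - G]
    bounds [|x|] by the solution at [z = 1]. *)
Lemma Cmod_Tf_le_dc_gain z i : Defs.Cmod z = 1 -> (i < n)%nat ->
  Defs.Cmod (Tf n G q i z) <= dc_gain i.
Proof.
  intros Hz Hi.
  pose proof (resolvent_spec n G Hsp q z ltac:(change (Cmod z) with (Defs.Cmod z); lra)) as Hx.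
  set (x := resolvent_eq n G q z) in Hx.
  set (a := fun k => Cmod (x k)).
  assert (Ha : forall k, (k < n)%nat ->
    0 <= shifted_apply n G 1 (fun l => dc_gain l - a l) k).
  { intros k Hk. rewrite shifted_apply_minus, shifted_apply_dc_gain by auto.
    assert (Hxk : Cmult z (x k) = Cplus (Cmxv n G x k) (RtoC (if (k =? q)%nat then 1 else 0))).
    { specialize (Hx k Hk).
      change (Defs.RtoC ?t) with (RtoC t) in Hx. rewrite <- Hx.
      apply injective_projections; simpl; ring. }
    assert (Hak : a k = Cmod (Cplus (Cmxv n G x k) (RtoC (if (k =? q)%nat then 1 else 0)))).
    { rewrite <- Hxk, Cmod_mult. change (Cmod z) with (Defs.Cmod z). rewrite Hz. unfold a. ring. }
    assert (Hsum : Cmod (Cmxv n G x k) <= rsum n (fun l => G k l * a l)).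
    { unfold Cmxv. eapply Rle_trans; [apply Cmod_Csum|]. apply rsum_le; intros l Hl.
      change (Cmod (Cmult (RtoC (G k l)) (x l)) <= G k l * a l).
      rewrite Cmod_mult, Cmod_RtoC_nonneg by (apply HG; auto). apply Rle_refl. }
    pose proof (Cmod_triangle (Cmxv n G x k) (RtoC (if (k =? q)%nat then 1 else 0))).
    rewrite Cmod_RtoC_nonneg in H by (destruct (k =? q)%nat; lra).
    unfold shifted_apply. destruct (k =? q)%nat; lra. }
  pose proof (inverse_positive_one n G HG Hsp _ Ha i Hi). unfold a, x in H.
  change (Defs.Cmod (Tf n G q i z)) with (Cmod (resolvent_eq n G q z i)). lra.
Qed.

Lemma Hinf_norm_dc_gain i : (i < n)%nat -> Hinf_norm n G q i = dc_gain i.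
Proof.
  intros Hi.
  set (U := fun y => exists z, Defs.Cmod z = 1 /\ y = Defs.Cmod (Tf n G q i z)).
  assert (HU : is_lub U (dc_gain i)).
  { split.
    - intros y [z [Hz ->]]. apply Cmod_Tf_le_dc_gain; auto.
    - intros b Hb. apply Hb. exists (Defs.RtoC 1). rewrite Cmod_Tf_one by auto.
      split; [change (Cmod (RtoC 1) = 1); apply Cmod_RtoC_nonneg; lra|reflexivity]. }
  assert (Heps : is_lub U (Hinf_norm n G q i))
    by (apply (epsilon_spec (inhabits 0) (is_lub U)); eexists; eauto).
  destruct HU as [HU1 HU2], Heps as [He1 He2].
  apply Rle_antisym; [apply He2|apply HU2]; auto.
Qed.

End TransferFunction.

(** * A maximum principle across a singleton cutset *)

Section Cutset.

Variables (n : nat) (G : nat -> nat -> R) (q j : nat) (Sset Pset : nat -> bool).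
Hypothesis HG : nonneg_mx n G.
Hypothesis Hsp : spectral_radius_lt n G 1.
Hypothesis Hcut : node_cutset n G q Sset (fun i => Nat.eqb i j) Pset.

Lemma cutset_lt : (j < n)%nat.
Proof. apply (proj1 Hcut). right; left; apply Nat.eqb_refl. Qed.

Lemma cutset_P_spec i : Pset i = true -> (i < n)%nat /\ i <> q /\ i <> j /\ Sset i = false.
Proof.
  destruct Hcut as [Hb [Hpart [_ [_ [_ [Hq _]]]]]]. intros Hi.
  assert (Hin : (i < n)%nat) by (apply Hb; right; right; exact Hi).
  destruct (Hpart i Hin) as [[? [? ?]]|[[? [? ?]]|[? [? ?]]]]; try congruence.
  repeat split; auto; intros ->; [congruence|rewrite Nat.eqb_refl in *; congruence].
Qed.

Lemma cutset_P_row i k : Pset i = true -> (k < n)%nat -> Pset k = false -> k <> j -> G i k = 0.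
Proof.
  destruct Hcut as [_ [Hpart [_ [_ [_ [_ [_ Hsep]]]]]]]. intros Hi Hk HPk Hkj.
  destruct (Hpart k Hk) as [[HS _]|[[_ [HC _]]|[_ [_ HP]]]].
  - apply (Hsep i k Hi HS).
  - apply Nat.eqb_eq in HC. lia.
  - congruence.
Qed.

(** With [s = 1] this says [x] attains its maximum over [P] at the cut node when the rows of
    [[G_pp G_pc]] are substochastic; with [s = -1], its minimum when they are superstochastic. *)
Lemma cutset_max_principle (s : R) (x : nat -> R) :
  (forall i, Pset i = true -> x i = rsum n (fun k => G i k * x k)) ->
  (forall i, Pset i = true ->
     0 <= s * x j * (1 - Gtilde_rowsum n G (fun i => Nat.eqb i j) Pset i)) ->
  forall j1, Pset j1 = true -> s * (x j1 - x j) <= 0.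
Proof.
  intros Hfix Hrow.
  set (w := fun k => if Pset k then Rmax (s * (x k - x j)) 0 else 0).
  assert (Hw : forall k, 0 <= w k) by (intros; unfold w; destruct (Pset k); [apply Rmax_r|lra]).
  assert (Hsub : forall i, (i < n)%nat -> w i <= rsum n (fun k => G i k * w k)).
  { intros i Hi.
    assert (HGw : 0 <= rsum n (fun k => G i k * w k))
      by (apply rsum_nonneg; intros; apply Rmult_le_pos; auto).
    unfold w at 1. destruct (Pset i) eqn:HPi; [apply Rmax_lub; auto|lra].
    set (c := fun k => if orb (Pset k) (k =? j)%nat then G i k else 0).
    assert (Hxi : x i = rsum n (fun k => c k * x k)).
    { rewrite (Hfix i HPi). apply rsum_ext; intros k Hk. unfold c.
      destruct (Pset k) eqn:HPk; [reflexivity|]. simpl.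
      destruct (Nat.eqb_spec k j); [reflexivity|]. rewrite (cutset_P_row i k); auto. }
    assert (Hsplit : s * (x i - x j) = rsum n (fun k => c k * (s * (x k - x j)))
        - s * x j * (1 - Gtilde_rowsum n G (fun i => Nat.eqb i j) Pset i)).
    { unfold Gtilde_rowsum. fold c. rewrite Hxi.
      rewrite (rsum_ext n (fun k => c k * (s * (x k - x j)))
        (fun k => s * (c k * x k) + - ((s * x j) * c k))), rsum_plus,
        rsum_opp, !rsum_scal by (intros; ring).
      ring. }
    assert (Hterm : rsum n (fun k => c k * (s * (x k - x j))) <= rsum n (fun k => G i k * w k)).
    { apply rsum_le; intros k Hk. unfold c, w. destruct (Pset k) eqn:HPk; simpl.
      - pose proof (Rmax_l (s * (x k - x j)) 0). pose proof (HG i k Hi Hk). nra.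
      - destruct (Nat.eqb_spec k j) as [->|]; lra. }
    specialize (Hrow i HPi). lra. }
  intros j1 Hj1. pose proof (subinvariant_nonpos n G HG Hsp w Hsub j1 (proj1 (cutset_P_spec j1 Hj1))).
  unfold w in H. rewrite Hj1 in H. pose proof (Rmax_l (s * (x j1 - x j)) 0). lra.
Qed.

End Cutset.

(** * Error probabilities decrease with the gain of the sensor *)

Lemma affine_ratio_le a b u v t1 t2 :
  0 <= b -> 0 < v -> 0 <= t1 -> t1 <= t2 -> b * u <= a * v ->
  (a * t1 + u) / (b * t1 + v) <= (a * t2 + u) / (b * t2 + v).
Proof.
  intros Hb Hv Ht1 Ht12 Hab.
  assert (D1 : 0 < b * t1 + v) by nra. assert (D2 : 0 < b * t2 + v) by nra.
  enough (0 <= (a * t2 + u) / (b * t2 + v) - (a * t1 + u) / (b * t1 + v)) by lra.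
  replace ((a * t2 + u) / (b * t2 + v) - (a * t1 + u) / (b * t1 + v))
    with ((a * v - b * u) * (t2 - t1) / ((b * t1 + v) * (b * t2 + v))) by (field; lra).
  apply Rmult_le_pos; [nra|left; apply Rinv_0_lt_compat; nra].
Qed.

Lemma error_probs_antitone n G q N mu sc2 s12 s22 sv2 l1 l2 :
  nonneg_mx n G -> spectral_radius_lt n G 1 ->
  0 < sv2 -> 0 < sc2 -> 0 <= s22 -> s22 < s12 -> (l1 < n)%nat -> (l2 < n)%nat ->
  dc_gain n G q l1 <= dc_gain n G q l2 ->
  Pem n G q N mu sc2 sv2 l2 <= Pem n G q N mu sc2 sv2 l1 /\
  Pev n G q s12 s22 sv2 l2 <= Pev n G q s12 s22 sv2 l1.
Proof.
  intros HG Hsp Hv Hc H22 H12 Hl1 Hl2 Hgain.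
  pose proof (dc_gain_nonneg n G q HG Hsp l1 Hl1) as Hg1.
  assert (Hsq : dc_gain n G q l1 ^ 2 <= dc_gain n G q l2 ^ 2) by (simpl; nra).
  split.
  - unfold Pem, eta_s. rewrite !Cmod_Tf_one by auto.
    apply QN_antitone, Rmult_le_compat_r; [lra|]. apply sqrt_le_1_alt.
    pose proof (affine_ratio_le (INR N * mu ^ 2) sc2 0 sv2 _ _ (Rlt_le _ _ Hc) Hv
      (pow2_ge_0 _) Hsq) as Hratio.
    rewrite !Rplus_0_r in Hratio. apply Hratio.
    rewrite Rmult_0_r. apply Rmult_le_pos; [|lra].
    apply Rmult_le_pos; [apply pos_INR|apply pow2_ge_0].
  - unfold Pev, Rs. change (Pev_ratio (Rs n G q s12 s22 sv2 l2) <=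
                            Pev_ratio (Rs n G q s12 s22 sv2 l1)).
    unfold Rs. rewrite !Hinf_norm_dc_gain by auto.
    apply Pev_ratio_antitone.
    + replace 1 with ((s12 * 0 + sv2) / (s22 * 0 + sv2)) by (field; lra).
      apply affine_ratio_le; auto using pow2_ge_0; nra.
    + apply affine_ratio_le; auto using pow2_ge_0; nra.
Qed.

Theorem proposition4 (n : nat) (G : nat -> nat -> R) (q j : nat)
  (Sset Pset : nat -> bool) (N : nat) (mu1 mu2 sc2 s12 s22 sv2 : R) :
  (q < n)%nat ->
  nonneg_mx n G ->
  spectral_radius_lt n G 1 ->
  0 < sv2 ->
  node_cutset n G q Sset (fun i => Nat.eqb i j) Pset ->
  (1 <= N)%nat -> 0 < sc2 ->
  0 <= s22 -> s22 < s12 ->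
  ((forall i, Pset i = true -> Gtilde_rowsum n G (fun i => Nat.eqb i j) Pset i <= 1) ->
   forall j1, Pset j1 = true ->
     Pem n G q N (mu2 - mu1) sc2 sv2 j <= Pem n G q N (mu2 - mu1) sc2 sv2 j1 /\
     Pev n G q s12 s22 sv2 j <= Pev n G q s12 s22 sv2 j1) /\
  ((forall i, Pset i = true -> Gtilde_rowsum n G (fun i => Nat.eqb i j) Pset i > 1) ->
   forall j1, Pset j1 = true ->
     Pem n G q N (mu2 - mu1) sc2 sv2 j >= Pem n G q N (mu2 - mu1) sc2 sv2 j1 /\
     Pev n G q s12 s22 sv2 j >= Pev n G q s12 s22 sv2 j1).
Proof.
  intros _ HG Hsp Hv Hcut _ Hc H22 H12.
  pose proof (cutset_lt n G q j Sset Pset Hcut) as Hj.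
  set (x := dc_gain n G q).
  assert (Hxj : 0 <= x j) by (apply dc_gain_nonneg; auto).
  assert (Hfix : forall i, Pset i = true -> x i = rsum n (fun k => G i k * x k)).
  { intros i Hi. destruct (cutset_P_spec n G q j Sset Pset Hcut i Hi) as [Hin [Hiq _]].
    pose proof (shifted_apply_dc_gain n G q Hsp i Hin) as Hx.
    destruct (Nat.eqb_spec i q); [contradiction|]. unfold shifted_apply in Hx. fold x in Hx. lra. }
  split; intros Hrow j1 Hj1; pose proof (proj1 (cutset_P_spec n G q j Sset Pset Hcut j1 Hj1)).
  - pose proof (cutset_max_principle n G q j Sset Pset HG Hsp Hcut 1 x Hfix) as Hmax.
    apply (error_probs_antitone n G q N _ sc2 s12 s22 sv2 j1 j); auto.
    enough (1 * (x j1 - x j) <= 0) by (unfold x in *; lra). apply Hmax; auto.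
    intros i Hi. specialize (Hrow i Hi). nra.
  - pose proof (cutset_max_principle n G q j Sset Pset HG Hsp Hcut (-1) x Hfix) as Hmax.
    destruct (error_probs_antitone n G q N (mu2 - mu1) sc2 s12 s22 sv2 j j1); auto; [|lra].
    enough (-1 * (x j1 - x j) <= 0) by (unfold x in *; lra). apply Hmax; auto.
    intros i Hi. specialize (Hrow i Hi). nra.
Qed.
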